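(* Let $\mathbb{F}$ be a field and let $P_i(\lambda)\in \mathbb{F}[\lambda]^{m_i\times n}$, $i=1,\ldots,k$ ($k\ge 1$), be polynomial matrices such that $m:=\sum_{i=1}^k m_i\ge n$. Let $P(\lambda)\in\mathbb{F}[\lambda]^{m\times n}$ be the compound matrix obtained by stacking $P_1(\lambda),\ldots,P_k(\lambda)$ vertically, and assume $r:=\operatorname{rank}P(\lambda)\ge 1$ (normal rank). Then for $G(\lambda)\in\mathbb{F}[\lambda]^{r\times n}$ the following are equivalent: (1) $G(\lambda)$ is a compact GCRD of $\{P_i(\lambda)\}_{i=1}^k$; (2) there exists a left invertible polynomial matrix $N(\lambda)\in\mathbb{F}[\lambda]^{m\times r}$ such that $P(\lambda)=N(\lambda)G(\lambda)$; (3) there exists a unimodular matrix $U(\lambda)\in\mathbb{F}[\lambda]^{m\times m}$ such that $P(\lambda)=U(\lambda)\begin{bmatrix} G(\lambda)\\ 0\end{bmatrix}$. Moreover, any compact GCRD $G(\lambda)$ of $\{P_i(\lambda)\}_{i=1}^k$ can be written as $G(\lambda)=\sum_{i=1}^k L_i(\lambda)P_i(\lambda)$ for some polynomial matrices $L_i(\lambda)\in\mathbb{F}[\lambda]^{r\times m_i}$; equivalently, $G(\lambda)=L(\lambda)P(\lambda)$ for some $L(\lambda)\in\mathbb{F}[\lambda]^{r\times m}$.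
   Context: A matrix $D(\lambda)\in\mathbb{F}[\lambda]^{p\times n}$ is a common right divisor (CRD) of $\{P_i(\lambda)\}_{i=1}^k$ if there are polynomial matrices $Q_i(\lambda)\in\mathbb{F}[\lambda]^{m_i\times p}$ with $P_i(\lambda)=Q_i(\lambda)D(\lambda)$ for all $i$. A matrix $G(\lambda)\in\mathbb{F}[\lambda]^{\ell\times n}$ is a greatest common right divisor (GCRD) if it is a CRD and for every CRD $D(\lambda)\in\mathbb{F}[\lambda]^{p\times n}$ there is a polynomial $Q(\lambda)\in\mathbb{F}[\lambda]^{\ell\times p}$ with $G(\lambda)=Q(\lambda)D(\lambda)$. A GCRD (resp. CRD) with exactly $r$ rows, where $r$ is the normal rank of the compound matrix, is called compact. The normal rank is the rank over the field of fractions $\mathbb{F}(\lambda)$. A square polynomial matrix is unimodular if its determinant is a nonzero constant; $N(\lambda)$ is left invertible if there is a polynomial matrix $L(\lambda)$ with $L(\lambda)N(\lambda)=I$. *)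

From HB Require Import structures.
From mathcomp Require Import all_boot all_order all_algebra.
Set Implicit Arguments. Unset Strict Implicit. Unset Printing Implicit Defensive.
Import GRing.Theory.
Local Open Scope ring_scope.

Definition nrank (F : fieldType) (a b : nat) (A : 'M[{poly F}]_(a, b)) : nat :=
  \rank (map_mx (@FracField.tofrac _) A : 'M[{fraction {poly F}}]_(a, b)).

Definition is_CRD (F : fieldType) (k n : nat) (ms : 'I_k -> nat)
    (P : forall i : 'I_k, 'M[{poly F}]_(ms i, n)) (p : nat)
    (D : 'M[{poly F}]_(p, n)) : Prop :=
  exists Q : forall i : 'I_k, 'M[{poly F}]_(ms i, p),
    forall i : 'I_k, P i = Q i *m D.

Definition is_GCRD (F : fieldType) (k n : nat) (ms : 'I_k -> nat)
    (P : forall i : 'I_k, 'M[{poly F}]_(ms i, n)) (l : nat)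
    (G : 'M[{poly F}]_(l, n)) : Prop :=
  is_CRD P G /\
  forall (p : nat) (D : 'M[{poly F}]_(p, n)),
    is_CRD P D -> exists Q : 'M[{poly F}]_(l, p), G = Q *m D.

Definition is_compact_GCRD (F : fieldType) (k n : nat) (ms : 'I_k -> nat)
    (P : forall i : 'I_k, 'M[{poly F}]_(ms i, n)) (l : nat)
    (G : 'M[{poly F}]_(l, n)) : Prop :=
  l = nrank (mxcol P) /\ is_GCRD P G.

Definition unimodular (F : fieldType) (a : nat) (U : 'M[{poly F}]_a) : Prop :=
  exists c : F, c != 0 /\ \det U = c%:P.

Definition left_invertible (F : fieldType) (a b : nat)
    (N : 'M[{poly F}]_(a, b)) : Prop :=
  exists L : 'M[{poly F}]_(b, a), L *m N = 1%:M.

(* The m x n matrix [G; 0] obtained by padding G (r x n) with zero rows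
   (used with r <= m). *)
Definition pad_zero_rows (R : pzRingType) (m r n : nat) (G : 'M[R]_(r, n))
    : 'M[R]_(m, n) :=
  \matrix_(i < m, j < n)
    match (insub (nat_of_ord i) : option 'I_r) with
    | Some i' => G i' j
    | None => 0
    end.

(* Row reduction by the Euclidean algorithm brings any polynomial matrix A to
   the form V A = [H; 0] with V unimodular and H of full row rank over F(lambda);
   H then has nrank A rows.  Applied to the compound matrix P, this H is a
   compact common right divisor.  A GCRD G of the same size factors as G = Q H,
   and being itself a common right divisor it gives H = Y G; full row rank of H
   forces Y Q = 1, so Y is unimodular and P = V^-1 diag(Y, I) [G; 0].
   Conversely, P = N G with L N = I makes G a GCRD, because any common right
   divisor D with P = Q' D gives G = L P = (L Q') D; the same identity G = L P
   is the Bezout-type combination of the P_i. *)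

From HB Require Import structures.
From mathcomp Require Import all_boot all_order all_algebra.
From mathcomp Require Import perm.
Set Implicit Arguments. Unset Strict Implicit. Unset Printing Implicit Defensive.
Import GRing.Theory.
Local Open Scope ring_scope.

Section PartialIdentity.
Variable R : comUnitRingType.

Lemma pad_zero_rowsE m r n (G : 'M[R]_(r, n)) : pad_zero_rows m G = pid_mx r *m G.
Proof.
apply/matrixP => i j; rewrite !mxE.
case: insubP => [i' _ val_i' | not_lt_ir].
  rewrite (bigD1 i') //= big1 ?addr0 => [|l ne_l_i']; rewrite !mxE -val_i'.
    by rewrite eqxx ltn_ord mul1r.
  by rewrite (inj_eq val_inj) eq_sym (negPf ne_l_i') mul0r.
rewrite big1 // => l _; rewrite !mxE.
case: eqP => [eq_il | _]; last by rewrite mul0r.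
by rewrite eq_il ltn_ord in not_lt_ir.
Qed.

Lemma pid_mxS_block m n s :
  pid_mx (1 + s) = block_mx 1%:M 0 0 (pid_mx s) :> 'M[R]_(1 + m, 1 + n).
Proof.
apply/matrixP => i j; rewrite -(splitK i) -(splitK j).
case: (split i) => i'; case: (split j) => j';
  rewrite /= ?block_mxEul ?block_mxEur ?block_mxEdl ?block_mxEdr !mxE /=;
  by rewrite ?ord1 ?eqn_add2l ?ltn_add2l.
Qed.

Lemma pid_mx_linv m r :
  (r <= m)%N -> (pid_mx r : 'M[R]_(r, m)) *m pid_mx r = 1%:M.
Proof. by move=> le_rm; rewrite pid_mx_id // pid_mx_1. Qed.

(* diag(X, I) for r <= m, written without casting m to r + (m - r). *)
Definition ulblock_mx m r (X : 'M[R]_r) : 'M[R]_m :=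
  pid_mx r *m X *m pid_mx r + copid_mx r.

Section Ulblock.
Variables m r : nat.
Hypothesis le_rm : (r <= m)%N.

Lemma ulblock_mx_pid (X : 'M[R]_r) : ulblock_mx m X *m pid_mx r = pid_mx r *m X.
Proof.
by rewrite mulmxDl mul_copid_mx_pid // addr0 -mulmxA pid_mx_linv // mulmx1.
Qed.

Lemma ulblock_mx1 : ulblock_mx m (1%:M : 'M[R]_r) = 1%:M.
Proof. by rewrite /ulblock_mx mulmx1 pid_mx_id // addrC subrK. Qed.

Lemma ulblock_mxM (X Y : 'M[R]_r) :
  ulblock_mx m (X *m Y) = ulblock_mx m X *m ulblock_mx m Y.
Proof.
have ulX_copid : ulblock_mx m X *m copid_mx r = copid_mx r.
  by rewrite mulmxDl -mulmxA mul_pid_mx_copid // mulmx0 add0r copid_mx_id.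
by rewrite [RHS]mulmxDr ulX_copid !mulmxA ulblock_mx_pid /ulblock_mx !mulmxA.
Qed.

Lemma unitmx_ulblock (X : 'M[R]_r) : X \in unitmx -> ulblock_mx m X \in unitmx.
Proof.
move=> uX; have /mulmx1_unit[] // : ulblock_mx m X *m ulblock_mx m (invmx X) = 1%:M.
by rewrite -ulblock_mxM mulmxV // ulblock_mx1.
Qed.

End Ulblock.
End PartialIdentity.

Section FieldRowFree.
Variable K : fieldType.

Lemma row_free0 n (A : 'M[K]_(0, n)) : row_free A.
Proof. by rewrite /row_free -leqn0 rank_leq_row. Qed.

Lemma row_free_row_0mx s p n (H : 'M[K]_(s, n)) :
  row_free (row_mx (0 : 'M_(s, p)) H) = row_free H.
Proof. by rewrite /row_free rank_row_0mx. Qed.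

Lemma row_free_trig_block_mx s n (g : 'M[K]_1) (b : 'M[K]_(1, n)) (H : 'M[K]_(s, n)) :
  g != 0 -> row_free H -> row_free (block_mx g b 0 H).
Proof.
move=> g_neq0 free_H; apply: inj_row_free => v.
rewrite -(hsubmxK v) mul_row_block mulmx0 addr0 -row_mx0 => /eq_row_mx[vg0 vbH0].
have v1_0 : lsubmx v = 0.
  move: vg0; rewrite [g]mx11_scalar mul_mx_scalar => /eqP.
  rewrite scalemx_eq0 => /orP[g00 | /eqP //]; case/eqP: g_neq0.
  by apply/matrixP => i j; rewrite !ord1 mxE (eqP g00).
move: vbH0; rewrite v1_0 mul0mx add0r -(mul0mx _ H) => /(row_free_inj free_H) ->.
by rewrite row_mx0.
Qed.

End FieldRowFree.

Section PolyMatrix.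
Variable F : fieldType.
Local Notation R := {poly F}.
Local Notation frac := (map_mx (@FracField.tofrac _)).

Lemma unimodularE m (U : 'M[R]_m) : unimodular U <-> U \in unitmx.
Proof.
rewrite unitmxE poly_unitE; split => [[c [c_neq0 ->]] | /andP[/eqP size_det1 u0]].
  by rewrite size_polyC c_neq0 coefC unitfE.
exists (\det U)`_0; split; first by rewrite -unitfE.
by apply: size1_polyC; rewrite size_det1.
Qed.

Lemma frac_mx_inj m n : injective (frac : 'M[R]_(m, n) -> _).
Proof.
move=> A B /matrixP eqAB; apply/matrixP => i j.
by move: (eqAB i j); rewrite !mxE => /eqP; rewrite tofrac_eq => /eqP.
Qed.

Lemma frac_unitmx m (V : 'M[R]_m) : V \in unitmx -> frac V \in unitmx.
Proof.
rewrite !unitmxE det_map_mx unitfE tofrac_eq0.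
by apply: contraTneq => ->; rewrite unitr0.
Qed.

Lemma frac_row_free_inj p s n (H : 'M[R]_(s, n)) :
  row_free (frac H) -> injective (mulmx^~ H : 'M[R]_(p, s) -> _).
Proof.
move=> free_H X Y /(congr1 frac); rewrite !map_mxM => /(row_free_inj free_H).
exact: frac_mx_inj.
Qed.

Lemma unit_col_modp m (c : 'cV[R]_(1 + m)) :
  exists2 V : 'M[R]_(1 + m), V \in unitmx &
    V *m c = col_mx (usubmx c) (map_mx (fun p => p %% c 0 0) (dsubmx c)).
Proof.
pose Q := map_mx (fun p => p %/ c 0 0) (dsubmx c).
exists (block_mx 1%:M 0 (- Q) 1%:M).
  by rewrite unitmxE det_lblock !det1 mul1r unitr1.
rewrite -{1}(vsubmxK c) mul_block_col !mul1mx mul0mx addr0; congr col_mx.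
apply/matrixP => i j; rewrite ord1 !mxE big_ord1 !mxE.
have -> : lshift m (0 : 'I_1) = 0 by apply: val_inj.
by apply/eqP; rewrite mulNr addrC subr_eq addrC -divp_eq.
Qed.

Lemma unit_col_reduction m (c : 'cV[R]_(1 + m)) :
  exists2 V : 'M[R]_(1 + m), V \in unitmx & exists g : 'M[R]_1, V *m c = col_mx g 0.
Proof.
have [i c_i | c0] := pickP (fun i => c i 0 != 0); last first.
  exists 1%:M; first exact: unitmx1.
  exists 0; rewrite mul1mx col_mx0; apply/matrixP => i j.
  by rewrite ord1 mxE; apply/eqP/negbFE/c0.
have [b size_ci] : exists b, (size (c i ord0) < b)%N by exists (size (c i ord0)).+1.
elim: b c i c_i size_ci => // b IHb c i c_i; rewrite ltnS => size_ci.
pose c1 := xrow i 0 c.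
have c1_00 : c1 0 0 = c i 0 by rewrite /c1 /xrow /row_perm mxE tpermR.
have [V1 uV1 eV1] := unit_col_modp c1.
have u_swap : V1 *m tperm_mx i 0 \in unitmx by rewrite unitmx_mul uV1 unitmx_perm.
have [d0 | /matrix0Pn[j [z d_j]]] := eqVneq (map_mx (fun p => p %% c1 0 0) (dsubmx c1)) 0.
  exists (V1 *m tperm_mx i 0) => //; exists (usubmx c1).
  by rewrite -mulmxA -xrowE eV1 d0.
rewrite ord1 in d_j.
have c2_j : (V1 *m c1) (rshift 1 j) 0 != 0 by rewrite eV1 col_mxEd.
have size_c2j : (size ((V1 *m c1) (rshift 1 j) ord0) < b)%N.
  by rewrite eV1 col_mxEd mxE (leq_trans (ltn_modpN0 _ _)) ?c1_00.
have [V uV [g eV]] := IHb _ _ c2_j size_c2j.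
exists (V *m (V1 *m tperm_mx i 0)); first by rewrite unitmx_mul uV u_swap.
by exists g; rewrite -!mulmxA -xrowE.
Qed.

Lemma unit_row_echelon n : forall m (A : 'M[R]_(m, n)),
  exists s (H : 'M[R]_(s, n)) (V : 'M[R]_m),
    [/\ V \in unitmx, (s <= m)%N, V *m A = pid_mx s *m H & row_free (frac H)].
Proof.
elim: n => [|n IHn] [|m] A; try by exists 0%N, 0, 1%:M;
  rewrite unitmx1 mulmx0 mul1mx ?thinmx0 ?flatmx0 row_free0.
move: A; rewrite -[n.+1]/(1 + n)%N -[m.+1]/(1 + m)%N => A.
have [V1 uV1 [g eV1]] := unit_col_reduction (lsubmx A).
pose B := V1 *m rsubmx A.
have eV1A : V1 *m A = row_mx (col_mx g 0) B by rewrite -{1}(hsubmxK A) mul_mx_row eV1.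
have [g0 | g_neq0] := eqVneq g 0.
  have [s [H [V [uV le_sm eVB free_H]]]] := IHn _ B.
  exists s, (row_mx 0 H), (V *m V1); split => //.
  - by rewrite unitmx_mul uV uV1.
  - by rewrite -mulmxA eV1A g0 col_mx0 !mul_mx_row !mulmx0 eVB.
  - by rewrite map_row_mx map_mx0 row_free_row_0mx.
have [s [H [V [uV le_sm eVB free_H]]]] := IHn _ (dsubmx B).
exists (1 + s)%N, (block_mx g (usubmx B) 0 H), (block_mx 1%:M 0 0 V *m V1); split.
- by rewrite unitmx_mul uV1 andbT unitmxE det_lblock det1 mul1r -unitmxE.
- by rewrite leq_add2l.
- rewrite -mulmxA eV1A -(vsubmxK B) -block_mxEh pid_mxS_block !mulmx_block.
  by rewrite !mul1mx !mul0mx !mulmx0 !addr0 !add0r eVB col_mxKu.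
- rewrite map_block_mx map_mx0; apply: row_free_trig_block_mx => //.
  by rewrite -(map_mx0 (@FracField.tofrac _)) (inj_eq (@frac_mx_inj _ _)).
Qed.

Lemma echelon_rows_nrank m n s (A : 'M[R]_(m, n)) (V : 'M[R]_m) (H : 'M[R]_(s, n)) :
  V \in unitmx -> (s <= m)%N -> V *m A = pid_mx s *m H -> row_free (frac H) ->
  nrank A = s.
Proof.
move=> uV le_sm eVA free_H.
have full_V : row_full (frac V) by rewrite row_full_unit frac_unitmx.
rewrite /nrank -(eqmxMfull (frac A) full_V) -map_mxM eVA map_mxM mxrankMfree //.
by rewrite map_pid_mx rank_pid_mx.
Qed.

Lemma unit_echelon_nrank m n (A : 'M[R]_(m, n)) :
  exists2 V : 'M[R]_m, V \in unitmx &
    exists2 H : 'M[R]_(nrank A, n), V *m A = pid_mx (nrank A) *m H & row_free (frac H).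
Proof.
have [s [H [V [uV le_sm eVA free_H]]]] := unit_row_echelon A.
by rewrite (echelon_rows_nrank uV le_sm eVA free_H); exists V => //; exists H.
Qed.

Lemma unimodular_factor_left_invertible m r n (A : 'M[R]_(m, n)) (U : 'M[R]_m)
    (G : 'M[R]_(r, n)) :
  (r <= m)%N -> unimodular U -> A = U *m pad_zero_rows m G ->
  exists N : 'M[R]_(m, r), left_invertible N /\ A = N *m G.
Proof.
move=> le_rm /unimodularE uU ->; exists (U *m pid_mx r); split.
  by exists (pid_mx r *m invmx U); rewrite mulmxA mulmxKV // pid_mx_linv.
by rewrite pad_zero_rowsE mulmxA.
Qed.

Section CompoundMatrix.
Variables (k n : nat) (ms : 'I_k -> nat) (P : forall i : 'I_k, 'M[R]_(ms i, n)).
Local Notation m := (\sum_(i < k) ms i)%N.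

Lemma is_CRDP p (D : 'M[R]_(p, n)) :
  is_CRD P D <-> exists Q : 'M[R]_(m, p), mxcol P = Q *m D.
Proof.
split => [[Q ePQD] | [Q ePQD]].
  by exists (mxcol Q); rewrite mxcol_mul; apply: eq_mxcol.
by exists (submxcol Q) => i; rewrite submxcol_mul -ePQD mxcolK.
Qed.

Lemma left_invertible_factor_GCRD l (N : 'M[R]_(m, l)) (G : 'M[R]_(l, n)) :
  left_invertible N -> mxcol P = N *m G -> is_GCRD P G.
Proof.
move=> [L LN] ePNG; split; first by apply/is_CRDP; exists N.
move=> p D /is_CRDP[Q ePQD]; exists (L *m Q).
by rewrite -mulmxA -ePQD ePNG mulmxA LN mul1mx.
Qed.

Lemma GCRD_unimodular_factor (G : 'M[R]_(nrank (mxcol P), n)) :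
  is_GCRD P G ->
  exists U : 'M[R]_m, unimodular U /\ mxcol P = U *m pad_zero_rows m G.
Proof.
move=> [crdG gcrdG]; set r := nrank (mxcol P).
have le_rm : (r <= m)%N := rank_leq_row _.
have [V uV [H eVP free_H]] := unit_echelon_nrank (mxcol P).
have crdH : is_CRD P H.
  by apply/is_CRDP; exists (invmx V *m pid_mx r); rewrite -mulmxA -eVP mulKmx.
have [Q eGQH] := gcrdG _ _ crdH.
have /is_CRDP[Q' ePQ'G] := crdG.
pose Y : 'M[R]_r := pid_mx r *m V *m Q'.
have eHYG : H = Y *m G by rewrite -!mulmxA -ePQ'G eVP mulmxA pid_mx_linv ?mul1mx.
have YQ : Y *m Q = 1%:M.
  by apply: (frac_row_free_inj free_H); rewrite mul1mx -mulmxA -eGQH -eHYG.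
have uY : Y \in unitmx by case: (mulmx1_unit YQ).
exists (invmx V *m ulblock_mx m Y); split.
  by apply/unimodularE; rewrite unitmx_mul unitmx_inv uV unitmx_ulblock.
rewrite pad_zero_rowsE -mulmxA (mulmxA _ (pid_mx r)) ulblock_mx_pid //.
by rewrite -mulmxA -eHYG -eVP mulKmx.
Qed.

End CompoundMatrix.
End PolyMatrix.

Theorem theorem2p9 (F : fieldType) (k n : nat) (ms : 'I_k -> nat)
    (P : forall i : 'I_k, 'M[{poly F}]_(ms i, n)) :
  (0 < k)%N ->
  (n <= \sum_(i < k) ms i)%N ->
  (1 <= nrank (mxcol P))%N ->
  (forall G : 'M[{poly F}]_(nrank (mxcol P), n),
     [<-> is_compact_GCRD P G;
          exists N : 'M[{poly F}]_(\sum_(i < k) ms i, nrank (mxcol P)),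
            left_invertible N /\ mxcol P = N *m G;
          exists U : 'M[{poly F}]_(\sum_(i < k) ms i),
            unimodular U /\ mxcol P = U *m pad_zero_rows (\sum_(i < k) ms i) G])
  /\
  (forall G : 'M[{poly F}]_(nrank (mxcol P), n),
     is_compact_GCRD P G ->
     (exists L : forall i : 'I_k, 'M[{poly F}]_(nrank (mxcol P), ms i),
        G = \sum_(i < k) L i *m P i)
     /\
     (exists L : 'M[{poly F}]_(nrank (mxcol P), \sum_(i < k) ms i),
        G = L *m mxcol P)).
Proof.
move=> _ _ _.
have le_rm : (nrank (mxcol P) <= \sum_(i < k) ms i)%N := rank_leq_row _.
have GCRD_left_invertible_factor (G : 'M_(nrank (mxcol P), n)) :
    is_compact_GCRD P G -> exists N, left_invertible N /\ mxcol P = N *m G.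
  move=> [_ /GCRD_unimodular_factor[U [uU ePUG]]].
  exact: unimodular_factor_left_invertible le_rm uU ePUG.
split=> [G | G /GCRD_left_invertible_factor[N [[L LN] ePNG]]].
  tfae=> [/GCRD_left_invertible_factor // | [N [invN ePNG]] | [U [uU ePUG]]].
  - by apply: GCRD_unimodular_factor; apply: left_invertible_factor_GCRD invN ePNG.
  - have [N [invN ePNG]] := unimodular_factor_left_invertible le_rm uU ePUG.
    by split=> //; apply: left_invertible_factor_GCRD invN ePNG.
have eGLP : G = L *m mxcol P by rewrite -[G]mul1mx -LN -mulmxA -ePNG.
split; last by exists L.
by exists (submxrow L); rewrite -mul_mxrow_mxcol submxrowK.
Qed.
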